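(* Let $n\ge 2$ and let $q$ be a prime power, and identify $E_q=\{0,1,\dots,q-1\}$ with the finite field $\mathbb{F}_q$, so that $E_q^n$ is an $n$-dimensional vector space over $\mathbb{F}_q$. Then every linear subspace $L\subseteq E_q^n$ with $|L|>1$ is metrically dense: $R(L)\le R(B)$ for every subset $B\subseteq E_q^n$ that is isometric to $L$.
   Context: $E_q^n$ carries the Hamming distance $d_H(x,y)=|\{i: x_i\neq y_i\}|$. For $A\subseteq E_q^n$, $R(A)$ is the number of coordinates $i$ such that the $i$-th coordinates of the elements of $A$ are not all equal (the number of non-constant columns of the matrix whose rows are the elements of $A$). Two subsets $A,B\subseteq E_q^n$ are isometric if there is a bijection $\phi:A\to B$ with $d_H(\phi(x),\phi(y))=d_H(x,y)$ for all $x,y\in A$. *)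

From HB Require Import structures.
From mathcomp Require Import all_boot all_order all_algebra.
Set Implicit Arguments. Unset Strict Implicit. Unset Printing Implicit Defensive.

(* Words of length n over an alphabet T are row vectors 'rV[T]_n;
   coordinate i of x is x ord0 i. *)

Definition dH (T : eqType) (n : nat) (x y : 'rV[T]_n) : nat :=
  #|[set i : 'I_n | x ord0 i != y ord0 i]|.

Definition R (T : finType) (n : nat) (A : {set 'rV[T]_n}) : nat :=
  #|[set i : 'I_n | [exists x in A, exists y in A, x ord0 i != y ord0 i]]|.

Definition isometric (T : finType) (n : nat) (A B : {set 'rV[T]_n}) : Prop :=
  exists phi : 'rV[T]_n -> 'rV[T]_n,
    [/\ {in A &, injective phi}, phi @: A = B &
        {in A &, forall x y, dH (phi x) (phi y) = dH x y}].

Definition vset (F : finFieldType) (n : nat) (L : {vspace 'rV[F]_n}) :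
  {set 'rV[F]_n} := [set x | x \in L].

From HB Require Import structures.
From mathcomp Require Import all_boot all_order all_algebra.
From mathcomp Require Import zify.
Set Implicit Arguments. Unset Strict Implicit. Unset Printing Implicit Defensive.

(* Count, over all ordered pairs of words of a set A of size m, the coordinates
   where the two words agree.  This total is n m^2 minus the sum of all
   distances, so isometries preserve it.  Column by column it is
   \sum_a c_a^2, where c_a is the number of words of A carrying the letter a in
   that column: this is m^2 on a constant column and, by Cauchy-Schwarz, at
   least m^2/q on a nonconstant one.  For a linear subspace every letter occurs
   equally often in a nonconstant column, so the bound is attained.  Hence for
   B isometric to L,
     n m^2 - R(L) (m^2 - m^2/q) = total(L) = total(B) >= n m^2 - R(B) (m^2 - m^2/q),
   that is R(L) <= R(B). *)

Lemma sqr_sum_le_card_sum_sqr (I : finType) (c : I -> nat) :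
  (\sum_a c a) ^ 2 <= #|I| * \sum_a c a ^ 2.
Proof.
rewrite -(leq_pmul2l (isT : 0 < 2)) -mulnn big_distrlr /= big_distrr /=.
apply: (@leq_trans (\sum_a \sum_b (c a ^ 2 + c b ^ 2))).
  by apply: leq_sum => a _; rewrite big_distrr /=; apply: leq_sum => b _; apply: nat_Cauchy.
rewrite (eq_bigr (fun a => #|I| * c a ^ 2 + \sum_b c b ^ 2)); last first.
  by move=> a _; rewrite big_split /= sum_nat_const cardT -cardE.
by rewrite big_split /= -big_distrr /= sum_nat_const cardT -cardE; lia.
Qed.

Lemma leq_of_weighted_count (n a b M N : nat) :
  M < N -> a <= n -> b <= n -> b * M + (n - b) * N <= a * M + (n - a) * N -> a <= b.
Proof. by move=> *; nia. Qed.

Section Columns.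
Variables (T : finType) (n : nat).
Implicit Types (A B : {set 'rV[T]_n}) (x y : 'rV[T]_n) (i : 'I_n) (a : T).

Definition agreements x y : nat := \sum_i (x ord0 i == y ord0 i).

Definition nonconstant_col A i : bool :=
  [exists x in A, exists y in A, x ord0 i != y ord0 i].

Definition col_coincidences A i : nat :=
  \sum_(x in A) \sum_(y in A) (x ord0 i == y ord0 i).

Definition col_fiber A i a : nat := #|[set x in A | x ord0 i == a]|.

Definition col_lower_bound A i : nat :=
  if nonconstant_col A i then #|A| ^ 2 else #|T| * #|A| ^ 2.

Lemma R_le_n A : R A <= n.
Proof. exact: leq_trans (max_card _) (eq_leq (card_ord n)). Qed.

Lemma agreements_add_dH x y : agreements x y + dH x y = n.
Proof.
rewrite /agreements /dH -sum1dep_card [X in _ + X]big_mkcond -big_split /=.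
by rewrite (eq_bigr (fun _ => 1)) ?sum1_card ?card_ord // => i _; case: eqP.
Qed.

Lemma sum_agreements A :
  \sum_(x in A) \sum_(y in A) agreements x y = \sum_i col_coincidences A i.
Proof. by under eq_bigr do rewrite exchange_big; rewrite exchange_big. Qed.

Lemma isometric_card A B : isometric A B -> #|B| = #|A|.
Proof. by case=> phi [phi_inj <- _]; rewrite card_in_imset. Qed.

Lemma isometric_sum_coincidences A B : isometric A B ->
  \sum_i col_coincidences B i = \sum_i col_coincidences A i.
Proof.
case=> phi [phi_inj <- phi_dH]; rewrite -!sum_agreements big_imset //.
apply: eq_bigr => x xA; rewrite big_imset //; apply: eq_bigr => y yA.
have := agreements_add_dH (phi x) (phi y); rewrite phi_dH //.
have := agreements_add_dH x y; lia.
Qed.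

Lemma sum_col_fiber_mul A i (G : T -> nat) :
  \sum_(x in A) G (x ord0 i) = \sum_a col_fiber A i a * G a.
Proof.
rewrite (partition_big (fun x => x ord0 i) predT) //=; apply: eq_bigr => a _.
rewrite (eq_bigr (fun _ => G a)); last by move=> x /andP[_ /eqP ->].
by rewrite sum_nat_cond_const; congr (#|_| * _); apply/setP => x; rewrite !inE.
Qed.

Lemma sum_col_fiber A i : \sum_a col_fiber A i a = #|A|.
Proof.
have := sum_col_fiber_mul A i (fun _ => 1); rewrite sum_nat_const muln1 => ->.
by apply: eq_bigr => a _; rewrite muln1.
Qed.

Lemma col_coincidences_fiber A i : col_coincidences A i = \sum_a col_fiber A i a ^ 2.
Proof.
rewrite /col_coincidences (sum_col_fiber_mul A i (fun a => \sum_(y in A) (a == y ord0 i))).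
apply: eq_bigr => a _; rewrite -mulnn /col_fiber -sum1dep_card big_mkcondr /=.
by congr (_ * _); apply: eq_bigr => y _; rewrite eq_sym; case: eqP.
Qed.

Lemma col_coincidences_const A i :
  ~~ nonconstant_col A i -> col_coincidences A i = #|A| ^ 2.
Proof.
move=> const_i; rewrite -mulnn -sum_nat_const; apply: eq_bigr => x xA.
rewrite -sum1_card; apply: eq_bigr => y yA; case: eqP => // neq_xy.
case/negP: const_i; apply/existsP; exists x; rewrite xA.
by apply/existsP; exists y; rewrite yA; apply/eqP.
Qed.

Lemma col_lower_bound_le A i : col_lower_bound A i <= #|T| * col_coincidences A i.
Proof.
rewrite /col_lower_bound; case: ifPn => [_ | /col_coincidences_const -> //].
by rewrite col_coincidences_fiber -{1}(sum_col_fiber A i) sqr_sum_le_card_sum_sqr.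
Qed.

Lemma sum_col_lower_bound A :
  \sum_i col_lower_bound A i = R A * #|A| ^ 2 + (n - R A) * (#|T| * #|A| ^ 2).
Proof.
transitivity (\sum_(i | nonconstant_col A i) #|A| ^ 2 +
              \sum_(i | ~~ nonconstant_col A i) #|T| * #|A| ^ 2).
  rewrite (bigID (nonconstant_col A)); congr (_ + _); apply: eq_bigr => i.
    by move=> /= nc_i; rewrite /col_lower_bound nc_i.
  by move=> /= c_i; rewrite /col_lower_bound ifN.
rewrite !sum_nat_cond_const; congr (_ + _ * _).
have -> : [set i | ~~ nonconstant_col A i] = ~: [set i | nonconstant_col A i].
  by apply/setP => i; rewrite !inE.
have := cardsC [set i | nonconstant_col A i].
by rewrite card_ord -[R A]/#|[set i | nonconstant_col A i]|; lia.
Qed.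

End Columns.

Section Subspace.
Import GRing.Theory.
Variables (F : finFieldType) (n : nat) (L : {vspace 'rV[F]_n}).

(* Translating by a vector [w] of [L] with [w_i = 1] maps the words of [L] with
   i-th letter 0 bijectively onto those with i-th letter a. *)
Lemma col_fiber_vspace i a : nonconstant_col (vset L) i ->
  col_fiber (vset L) i a = col_fiber (vset L) i 0%R.
Proof.
case/existsP=> x /andP[+ /existsP[y /andP[+ neq_xy]]]; rewrite !inE => xL yL.
pose w := ((x ord0 i - y ord0 i)^-1 *: (x - y))%R.
have wL : w \in L by rewrite memvZ ?memvB.
have w_i : w ord0 i = 1%R by rewrite !mxE mulVf // subr_eq0.
clearbody w.
rewrite /col_fiber -[in RHS](card_imset _ (addIr (a *: w)%R)).
apply: eq_card => z; rewrite !inE; apply/andP/imsetP => [[zL /eqP z_i] | [z']].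
  exists (z - a *: w)%R; last by rewrite addrNK.
  by rewrite !inE memvB ?memvZ // !mxE w_i mulr1 z_i subrr eqxx.
rewrite !inE => /andP[z'L /eqP z'_i] ->.
by rewrite memvD ?memvZ // !mxE z'_i w_i mulr1 add0r eqxx.
Qed.

Lemma col_coincidences_vspace i :
  #|F| * col_coincidences (vset L) i = col_lower_bound (vset L) i.
Proof.
rewrite /col_lower_bound; case: ifPn => [nc_i | /col_coincidences_const -> //].
rewrite col_coincidences_fiber -(sum_col_fiber (vset L) i).
under eq_bigr do rewrite (col_fiber_vspace _ nc_i).
under [in RHS]eq_bigr do rewrite (col_fiber_vspace _ nc_i).
by rewrite !sum_nat_const cardT -cardE; lia.
Qed.

End Subspace.

Theorem mainTheorem3 (F : finFieldType) (n : nat) (L : {vspace 'rV[F]_n}) :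
  (2 <= n)%N -> (1 < #|vset L|)%N ->
  forall B : {set 'rV[F]_n}, isometric (vset L) B -> (R (vset L) <= R B)%N.
Proof.
move=> _ L_gt1 B isoLB; set m := #|vset L|.
have m2_gt0 : 0 < m ^ 2 by rewrite expn_gt0 (ltnW L_gt1).
apply: (leq_of_weighted_count (M := m ^ 2) (N := #|F| * m ^ 2)).
- by rewrite ltn_Pmull ?card_finNzRing_gt1.
- exact: R_le_n.
- exact: R_le_n.
rewrite -(sum_col_lower_bound (vset L)) /m -(isometric_card isoLB) -sum_col_lower_bound.
under [in X in _ <= X]eq_bigr do rewrite -col_coincidences_vspace.
rewrite -big_distrr /= -(isometric_sum_coincidences isoLB) big_distrr /=.
by apply: leq_sum => i _; rewrite col_lower_bound_le.
Qed.
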